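(* Consider six spin-$\frac12$ particles with Hilbert space $(\mathbb{C}^2)^{\otimes 6}$ and standard product basis. For a pair of spins $i\neq j$ let $P_{ij}$ be the operator swapping spins $i$ and $j$, and for $\alpha\in\mathbb{R}$ let $\mathrm{SWAP}_{ij}^{\alpha}=\frac{1+P_{ij}}{2}+e^{i\pi\alpha}\frac{1-P_{ij}}{2}$. For pairs $(i_1,j_1),\ldots,(i_n,j_n)$ and $\alpha_1,\ldots,\alpha_n\in\mathbb{R}$ let $$U(\alpha_1,\ldots,\alpha_n)=\mathrm{SWAP}_{i_nj_n}^{\alpha_n}\cdots\mathrm{SWAP}_{i_1j_1}^{\alpha_1}.$$ For $s\in\{0,1\}$ let $e^{(s)}_1,\ldots,e^{(s)}_4$ be the four logical two-qubit basis states lying in the total-spin-$s$ subspace (these are fixed vectors with real coefficients in the standard product basis), write $U^{(s)}_{ab}=\langle e^{(s)}_a|U|e^{(s)}_b\rangle$, and define $$d_{\rm FW}(U)=\Big[2-\tfrac14\big|U^{(0)}_{11}+U^{(0)}_{22}+U^{(0)}_{34}+U^{(0)}_{43}\big|-\tfrac14\big|U^{(1)}_{11}+U^{(1)}_{22}+U^{(1)}_{34}+U^{(1)}_{43}\big|\Big]^{1/2}.$$ Then for all $\alpha_1,\ldots,\alpha_n$, $$d_{\rm FW}(U(\alpha_1,\ldots,\alpha_n))=d_{\rm FW}(U(2-\alpha_1,\ldots,2-\alpha_n)).$$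
   Context: Exchange-only encoding: two logical qubits $A$ and $B$ are each encoded in three physical spins (spins $A1,A2,A3$ and $B1,B2,B3$). A single logical qubit in spins labeled 1,2,3 is spanned by $\ket{0}_l=(\ket{010}-\ket{100})/\sqrt2$ and $\ket{1}_l=(2\ket{001}-\ket{010}-\ket{100})/\sqrt6$ (and analogous states in other spin sectors), all having real coefficients; the two-logical-qubit basis states $e^{(s)}_a$ ($a=1,\ldots,4$, ordered as $\ket{00}_l,\ket{01}_l,\ket{10}_l,\ket{11}_l$) within the subspace of total spin $s$ of the six spins are formed from these by real Clebsch–Gordan coupling, so they have real coefficients. $d_{\rm FW}$ measures the distance of $U$ from the logical CNOT gate, allowing independent phases in the total-spin-0 and total-spin-1 sectors. *)

From HB Require Import structures.
From mathcomp Require Import all_boot all_order all_algebra all_fingroup.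
From mathcomp Require Import complex.
From mathcomp Require Import reals trigo.

Set Implicit Arguments.
Unset Strict Implicit.
Unset Printing Implicit Defensive.

Import Order.TTheory GRing.Theory Num.Theory.
Local Open Scope ring_scope.
Local Open Scope complex_scope.

(* Product basis of six spin-1/2 particles: a basis state is a function
   assigning to each spin 'I_6 a value in 'I_2. *)
Definition spin_config := {ffun 'I_6 -> 'I_2}.
Definition N := #|{: spin_config}|.

Section Defs.
Variable R : realType.
Local Notation C := R[i].

Definition expipi (alpha : R) : C :=
  (cos (pi * alpha))%:C + 'i * (sin (pi * alpha))%:C.

Definition swap_config (i j : 'I_6) (f : spin_config) : spin_config :=
  [ffun k => f (tperm i j k)].

Definition Pswap (i j : 'I_6) : 'M[C]_N :=
  \matrix_(a, b) ((enum_val a == swap_config i j (enum_val b))%:R : C).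

Definition SWAPpow (i j : 'I_6) (alpha : R) : 'M[C]_N :=
  (2%:R^-1 : C) *: (1%:M + Pswap i j)
  + (expipi alpha / 2%:R) *: (1%:M - Pswap i j).

(* U(alpha_1..alpha_n) = SWAP_{i_n j_n}^{alpha_n} ... SWAP_{i_1 j_1}^{alpha_1}
   (indices shifted to 0..n-1). *)
Definition Ugate (n : nat) (pr : 'I_n -> 'I_6 * 'I_6) (alpha : 'I_n -> R)
  : 'M[C]_N :=
  foldl (fun M k => SWAPpow (pr k).1 (pr k).2 (alpha k) *m M) 1%:M (enum 'I_n).

Definition braket (u : 'cV[C]_N) (U : 'M[C]_N) (v : 'cV[C]_N) : C :=
  ((map_mx conjc u)^T *m U *m v) 0 0.

(* U^{(s)}_{ab} with the logical basis e^{(s)}_a, a = 1..4 encoded as 0..3 *)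
Definition Ublock (e : 'I_4 -> 'cV[C]_N) (U : 'M[C]_N) (a b : 'I_4) : C :=
  braket (e a) U (e b).

Definition trCNOT (e : 'I_4 -> 'cV[C]_N) (U : 'M[C]_N) : C :=
  Ublock e U 0 0 + Ublock e U 1 1 + Ublock e U 2 3 + Ublock e U 3 2.

Definition dFW (e0 e1 : 'I_4 -> 'cV[C]_N) (U : 'M[C]_N) : R :=
  Num.sqrt (2 - Normc.normc (trCNOT e0 U) / 4%:R - Normc.normc (trCNOT e1 U) / 4%:R).

Definition real_vec (v : 'cV[C]_N) : Prop := forall k, Im (v k 0) = 0.

End Defs.

(* Replacing alpha by 2 - alpha conjugates e^{i pi alpha}; since P_ij is a
   real (0/1) matrix, SWAP_ij^{2 - alpha} is the entrywise complex conjugate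
   of SWAP_ij^alpha, hence U(2 - alpha) is the conjugate of U(alpha).  For
   real basis vectors the matrix elements of a conjugated matrix are the
   conjugated matrix elements, and d_FW only sees their moduli. *)

From HB Require Import structures.
From mathcomp Require Import all_boot all_order all_algebra all_fingroup.
From mathcomp Require Import complex.
From mathcomp Require Import reals trigo.
Import Order.TTheory GRing.Theory Num.Theory.
Local Open Scope ring_scope.
Local Open Scope complex_scope.

Lemma map_mx_foldl_mulmx {aR rR : pzRingType} {f : {rmorphism aR -> rR}}
    {n : nat} {I : Type} {A : I -> 'M[aR]_n} {B : I -> 'M[rR]_n}
    (M : 'M[aR]_n) (s : seq I) :
  (forall k, map_mx f (A k) = B k) ->
  map_mx f (foldl (fun M k => A k *m M) M s) =
  foldl (fun M k => B k *m M) (map_mx f M) s.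
Proof. by move=> fAB; elim: s M => [|k s IHs] M //=; rewrite IHs map_mxM fAB. Qed.

Section Conjugation.
Variable R : realType.
Local Notation C := R[i].

Lemma normc_conj (z : C) : Normc.normc z^* = Normc.normc z.
Proof. by case: z => x y /=; rewrite sqrrN. Qed.

Lemma expipi_2B (a : R) : expipi (2 - a) = (expipi a)^*.
Proof.
rewrite /expipi mulrBr mulr_natr cosB sinB cos2pi sin2pi.
rewrite !mul1r !mul0r addr0 sub0r.
by apply/eqP; rewrite eq_complex /= !mul0r !mul1r !subr0 !addr0 !add0r !eqxx.
Qed.

Lemma map_conj_Pswap (i j : 'I_6) : map_mx conjc (Pswap R i j) = Pswap R i j.
Proof. by apply/matrixP => a b; rewrite !mxE rmorph_nat. Qed.

Lemma SWAPpow_2B (i j : 'I_6) (a : R) :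
  SWAPpow i j (2 - a) = map_mx conjc (SWAPpow i j a).
Proof.
rewrite /SWAPpow map_mxD !map_mxZ map_mxD map_mxB map_conj_Pswap map_mx1.
by rewrite rmorphM rmorphV ?unitfE ?pnatr_eq0 // rmorph_nat expipi_2B.
Qed.

Lemma Ugate_2B (n : nat) (pr : 'I_n -> 'I_6 * 'I_6) (alpha : 'I_n -> R) :
  Ugate pr (fun k => 2 - alpha k) = map_mx conjc (Ugate pr alpha).
Proof.
rewrite /Ugate (map_mx_foldl_mulmx _ _ (fun k => esym (SWAPpow_2B _ _ _))).
by rewrite map_mx1.
Qed.

Lemma real_vec_conj (v : 'cV[C]_N) : real_vec v -> map_mx conjc v = v.
Proof.
move=> v_real; apply/matrixP => k l; rewrite mxE (ord1 l).
move: (v_real k); case: (v k 0) => x y.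
by rewrite -complexIm /= => -[->]; rewrite oppr0.
Qed.

Lemma braket_map_conj (u v : 'cV[C]_N) (U : 'M[C]_N) :
  real_vec u -> real_vec v -> braket u (map_mx conjc U) v = (braket u U v)^*.
Proof.
move=> u_real v_real.
have conj_entry (A : 'M[C]_1) : (A 0 0)^* = map_mx conjc A 0 0 by rewrite mxE.
rewrite /braket !real_vec_conj // conj_entry.
by rewrite !map_mxM -map_trmx !real_vec_conj.
Qed.

Lemma trCNOT_map_conj (e : 'I_4 -> 'cV[C]_N) (U : 'M[C]_N) :
  (forall a, real_vec (e a)) -> trCNOT e (map_mx conjc U) = (trCNOT e U)^*.
Proof. by move=> e_real; rewrite /trCNOT /Ublock !braket_map_conj // !rmorphD. Qed.

End Conjugation.

Theorem mainTheorem3 (R : realType) (e0 e1 : 'I_4 -> 'cV[R[i]]_N)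
  (he0 : forall a, real_vec (e0 a)) (he1 : forall a, real_vec (e1 a))
  (n : nat) (pr : 'I_n -> 'I_6 * 'I_6) (hpr : forall k, (pr k).1 != (pr k).2)
  (alpha : 'I_n -> R) :
  dFW e0 e1 (Ugate pr alpha) = dFW e0 e1 (Ugate pr (fun k => 2 - alpha k)).
Proof.
by rewrite Ugate_2B /dFW !trCNOT_map_conj // !normc_conj.
Qed.
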